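(* For $k=1,2,\dots$ let $f_k(x)=x+(-1)^k e^{e^k}$ and $p_k=\frac1k-\frac1{k+1}=\frac{1}{k(k+1)}$, and let $\mu$ be the probability measure on $\mathrm{Homeo}_+(\mathbb{R})$ with $\mu(\{f_k\})=p_k$. Then for every $x\in\mathbb{R}$ and every compact interval $J\subset\mathbb{R}$, almost surely $F_n(x)\in J$ for only finitely many $n$. The same conclusion holds if each $f_k$ is replaced by a map $\tilde f_k:\mathbb{R}\to\mathbb{R}$ (chosen with the same probability $p_k$) such that $\sup_{k\ge1}\sup_{x\in\mathbb{R}}|\tilde f_k(x)-f_k(x)|<\infty$.
   Context: Given the maps and probabilities, let $g_1,g_2,\dots$ be i.i.d. random maps, with $g_n$ equal to the $k$-th map with probability $p_k$, and $F_n=g_n\circ\cdots\circ g_1$. *)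

From HB Require Import structures.
From mathcomp Require Import all_boot all_order all_algebra.
From mathcomp Require Import all_classical all_reals all_analysis.
Set Implicit Arguments. Unset Strict Implicit. Unset Printing Implicit Defensive.
Import Order.TTheory GRing.Theory Num.Theory.
Local Open Scope classical_set_scope.
Local Open Scope ring_scope.

Definition fstep (R : realType) (k : nat) (x : R) : R :=
  x + (-1) ^+ k * expR (expR k%:R).

(* p_k = 1/(k(k+1)); note p_0 = 0 since 0^-1 = 0 in MathComp *)
Definition pk (R : realType) (k : nat) : R := (k%:R * k.+1%:R)^-1.

(* xi : nat -> T -> nat is an i.i.d. sequence with law P(xi_i = k) = p_k:
   each event [xi_i = k] is measurable and for every n and every choice
   ks, P(xi_0 = ks 0, ..., xi_{n-1} = ks (n-1)) = prod_{i<n} p_{ks i}. *)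
Definition iid_law d (T : measurableType d) (R : realType)
  (P : probability T R) (xi : nat -> T -> nat) : Prop :=
  (forall i k, measurable [set w | xi i w = k]) /\
  (forall (n : nat) (ks : nat -> nat),
     P (\bigcap_(i in [set i | (i < n)%N]) [set w | xi i w = ks i])
     = (\prod_(i < n) pk R (ks i))%:E).

(* F_n = g_n o ... o g_1, where g_{i+1} = maps (xi i); F_0 = id *)
Fixpoint Fcomp d (T : measurableType d) (R : realType)
  (maps : nat -> R -> R) (xi : nat -> T -> nat) (n : nat) (x : R) (w : T) : R :=
  match n with
  | 0 => x
  | m.+1 => maps (xi m w) (Fcomp maps xi m x w)
  end.

From HB Require Import structures.
From mathcomp Require Import all_boot all_order all_algebra.
From mathcomp Require Import all_classical all_reals all_analysis.
From mathcomp Require Import ring lra.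
Import Order.TTheory GRing.Theory Num.Theory.
Set Implicit Arguments. Unset Strict Implicit. Unset Printing Implicit Defensive.
Local Open Scope classical_set_scope.
Local Open Scope ring_scope.

(* Write E_k = exp(exp k), so that f_k(x) = x + (-1)^k E_k.  If each map
   used is within C of the corresponding f_k, then
       F_n(x) = x + sum_{i<n} ((-1)^{xi_i} E_{xi_i} + e_i),   |e_i| <= C.
   Since E_{K+1} >= E_K^2, the largest jump of such a sum dominates all the
   others together (dominant_sum).  Cut the time axis into the blocks
   [j(j+1), (j+1)(j+2)).  By the i.i.d. law, the event "xi_i <= j for every
   i < j(j+1)" has probability (j/(j+1))^{j(j+1)} <= 2^{-j}, so by
   Borel-Cantelli, almost surely, for all large j some i < j(j+1) has
   xi_i > j (ae_eventually_exceeds); also xi_i >= 1 almost surely, since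
   p_0 = 0 (ae_xi_pos).  For n in block j the sum then contains a jump E_K
   with K > j, and E_{K-1} >= E_j grows much faster than the block length,
   so F_n(x) is far from x for all large n (escape_pathwise).  The theorem
   is this pathwise statement applied on the almost sure event; the
   unperturbed maps f_k are the case C = 0. *)

Section Tower.
Variable R : realType.

Definition tower (k : nat) : R := expR (expR k%:R).

Definition jump (k : nat) : R := (-1) ^+ k * tower k.

Lemma fstepE (k : nat) (x : R) : fstep k x = x + jump k.
Proof. by []. Qed.

Lemma tower_ge0 (k : nat) : 0 <= tower k.
Proof. exact: expR_ge0. Qed.

Lemma tower_ge1 (k : nat) : 1 <= tower k.
Proof. by rewrite /tower -expR0 ler_expR expR_ge0. Qed.

Lemma tower_homo : {homo tower : k l / (k <= l)%N >-> k <= l}.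
Proof. by move=> k l kl; rewrite /tower !ler_expR ler_nat. Qed.

Lemma norm_jump (k : nat) : `|jump k| = tower k.
Proof. by rewrite normrM normr_sign mul1r ger0_norm // tower_ge0. Qed.

(* Each jump is at least the square of the previous one, since e >= 2. *)
Lemma tower_sq (k : nat) : tower k ^+ 2 <= tower k.+1.
Proof.
rewrite /tower expr2 -expRD ler_expR -addn1 natrD expRD.
have e2 : 2 <= expR (1 : R) by have := expR_ge1Dx (1 : R); lra.
have := expR_ge0 (k%:R : R); nra.
Qed.

(* A cubic lower bound: E_j >= 1 + exp(j)^3/6 >= (j+1)^3/6. *)
Lemma tower_ge_cube (j : nat) : j.+1%:R ^+ 3 / 6 <= tower j.
Proof.
have hcube := expR_ge1Dxn 2 (expR_ge0 (j%:R : R)).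
have hlin : j.+1%:R <= expR (j%:R : R) by rewrite -addn1 natrD addrC expR_ge1Dx.
have hpow : j.+1%:R ^+ 3 <= expR (j%:R : R) ^+ 3.
  by apply: lerXn2r; rewrite ?nnegrE ?ler0n ?expR_ge0.
rewrite /tower; move: hcube; rewrite (_ : (3`!)%:R = 6 :> R) //; lra.
Qed.

(* If the largest index among n signed jumps is K+1, their sum has size at
   least E_{K+1} - n E_K: the top jumps all have the same sign. *)
Lemma top_jump_dominates (n : nat) (k : nat -> nat) (K : nat) (i1 : 'I_n) :
  (forall i : 'I_n, (k i <= K.+1)%N) -> k i1 = K.+1 ->
  tower K.+1 - n%:R * tower K <= `|\sum_(i < n) jump (k i)|.
Proof.
move=> kK ki1; rewrite (bigID (fun i : 'I_n => k i == K.+1)) /=.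
set Stop := \sum_(i < n | _) _; set Srest := \sum_(i < n | _) _.
have hStop : tower K.+1 <= `|Stop|.
  rewrite /Stop (eq_bigr (fun=> jump K.+1)); last by move=> i /eqP ->.
  rewrite -mulr_sumr normrM normr_sign mul1r ger0_norm; last first.
    by apply: sumr_ge0 => i _; exact: tower_ge0.
  rewrite (bigD1 i1) /= ?ki1 // lerDl.
  by apply: sumr_ge0 => i _; exact: tower_ge0.
have hSrest : `|Srest| <= n%:R * tower K.
  apply: le_trans (ler_norm_sum _ _ _) _.
  apply: (@le_trans _ _ (\sum_(i < n) tower K));
    last by rewrite sumr_const card_ord mulr_natl.
  rewrite big_mkcond /=; apply: ler_sum => i _.
  case: ifPn => [hi|_]; last exact: tower_ge0.
  by rewrite norm_jump; apply: tower_homo; rewrite -ltnS ltn_neqAle hi kK.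
have := lerB_normD Stop Srest; lra.
Qed.

Lemma dominant_sum (n : nat) (k : nat -> nat) (e : nat -> R) (C L : R)
    (j : nat) (i0 : 'I_n) :
  0 <= C -> 0 <= L -> (forall i, `|e i| <= C) -> (j < k i0)%N ->
  2 * L + n%:R * (1 + C) + 1 <= tower j ->
  L < `|\sum_(i < n) (jump (k i) + e i)|.
Proof.
move=> C0 L0 eC jk hj.
have n_gt0 : (0 < #|'I_n|)%N by rewrite card_ord (leq_ltn_trans _ (ltn_ord i0)).
have [imax kmax] := bigop.eq_bigmax (fun i : 'I_n => k i) n_gt0.
have kle : forall i : 'I_n, (k i <= k imax)%N by move=> i; rewrite -kmax leq_bigmax.
have jK : (j < k imax)%N := leq_trans jk (kle i0).
case kiK: (k imax) kle jK => [//|K] kle jK.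
have htop := top_jump_dominates kle kiK.
have herr : `|\sum_(i < n) e i| <= n%:R * C.
  apply: le_trans (ler_norm_sum _ _ _) _.
  apply: (@le_trans _ _ (\sum_(i < n) C)); first exact: ler_sum.
  by rewrite sumr_const card_ord mulr_natl.
have hjK : tower j <= tower K by apply: tower_homo.
have hsq := tower_sq K; have h1 := tower_ge1 K.
have := lerB_normD (\sum_(i < n) jump (k i)) (\sum_(i < n) e i).
rewrite -big_split /=; set y := tower K in hjK hsq h1 htop *.
have hn : 0 <= (n%:R : R) by [].
have : 0 <= (y - 1) * (y - n%:R * (1 + C) - L) by apply: mulr_ge0; lra.
have : 0 <= n%:R * C * (y - 1) by apply: mulr_ge0; [apply: mulr_ge0|lra].
have : 0 <= L * (y - 1) by apply: mulr_ge0; lra.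
nra.
Qed.

Lemma tower_dominates_blocks (L C : R) : 0 <= L -> 0 <= C ->
  exists J0 : nat, forall j : nat, (J0 <= j)%N ->
    2 * L + (j.+1 * j.+2)%N%:R * (1 + C) + 1 <= tower j.
Proof.
move=> L0 C0; set D : R := 12 * L + 12 * (1 + C) + 6.
have D0 : 0 <= D by rewrite /D; lra.
exists (Num.Def.archi_bound D) => j hj.
have hu : D < j.+1%:R.
  by apply: lt_le_trans (archi_boundP D0) _; rewrite ler_nat ltnW.
set u : R := j.+1%:R in hu.
have hcube := tower_ge_cube j; rewrite -/u in hcube.
have -> : ((j.+1 * j.+2)%N%:R : R) = u * (u + 1).
  by rewrite natrM -[j.+2]addn1 natrD.
have u1 : 1 <= u by rewrite /u ler1n.
have f1 : 0 <= (u - D) * (u * u) by apply: mulr_ge0; nra.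
have f2 : 0 <= L * (u * u - 1) by apply: mulr_ge0; nra.
have f3 : 0 <= (1 + C) * (u * u - u) by apply: mulr_ge0; nra.
rewrite /D in f1; nra.
Qed.

End Tower.

Lemma block_of (n : nat) : exists j, (j * j.+1 <= n < j.+1 * j.+2)%N.
Proof.
elim: n => [|n [j /andP [lo hi]]]; first by exists 0%N.
have [n_hi|n_lo] := ltnP n.+1 (j.+1 * j.+2); first by exists j; rewrite n_hi leqW.
exists j.+1; have -> : n.+1 = (j.+1 * j.+2)%N by apply/eqP; rewrite eqn_leq hi n_lo.
by rewrite leqnn /= [X in (X < _)%N]mulnC ltn_pmul2l // ltnS leqnSn.
Qed.

Lemma itv_dist (R : realType) (x a b y : R) :
  y \in `[a, b] -> `|y - x| <= `|x| + `|a| + `|b|.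
Proof.
rewrite in_itv /= => /andP [ay yb].
have := ler_normD y (- x); rewrite normrN.
have : `|y| <= `|a| + `|b|.
  rewrite ler_norml; have := ler_norm b; have := ler_norm (- a); rewrite normrN.
  by have := normr_ge0 a; have := normr_ge0 b => *; apply/andP; split; lra.
lra.
Qed.

Section Pathwise.
Variables (R : realType) (d : measure_display) (T : measurableType d)
  (xi : nat -> T -> nat) (ft : nat -> R -> R).

Lemma Fcomp_sum (x : R) (w : T) (n : nat) :
  Fcomp ft xi n x w = x + \sum_(i < n) (jump R (xi i w) +
    (ft (xi i w) (Fcomp ft xi i x w) - fstep (xi i w) (Fcomp ft xi i x w))).
Proof.
elim: n => [|n IH]; first by rewrite big_ord0 addr0.
by rewrite big_ord_recr /= addrA -IH fstepE; ring.
Qed.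

Variable C : R.
Hypothesis ftC : forall (k : nat) (y : R), (1 <= k)%N -> `|ft k y - fstep k y| <= C.

Lemma escape_pathwise (w : T) (x a b : R) :
  (forall i, (0 < xi i w)%N) ->
  (exists J, forall j, (J <= j)%N -> exists2 i, (i < j * j.+1)%N & (j < xi i w)%N) ->
  finite_set [set n : nat | (0 < n)%N /\ Fcomp ft xi n x w \in `[a, b]].
Proof.
move=> xi_pos [J large].
have C0 : 0 <= C by apply: le_trans (ftC 0 (leqnn 1)).
set L := `|x| + `|a| + `|b|.
have L0 : 0 <= L by rewrite /L !addr_ge0.
have [J0 hJ0] := tower_dominates_blocks L0 C0.
set J1 := maxn J J0.
apply: (sub_finite_set _ (finite_II (J1 * J1.+1))) => n [_ Fn] /=.
rewrite ltnNge; apply/negP => n_big.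
have [j /andP [lo hi]] := block_of n.
have J1j : (J1 <= j)%N.
  rewrite leqNgt; apply/negP => jJ1.
  by have := leq_trans hi (leq_trans (leq_mul jJ1 (jJ1 : (j.+2 <= J1.+1)%N)) n_big); rewrite ltnn.
have [i ij ji] := large j (leq_trans (leq_maxl _ _) J1j).
have hE : 2 * L + n%:R * (1 + C) + 1 <= tower R j.
  apply: le_trans (hJ0 j (leq_trans (leq_maxr _ _) J1j)).
  have : (n%:R : R) <= (j.+1 * j.+2)%N%:R by rewrite ler_nat ltnW.
  by move=> ?; rewrite lerD2r lerD2l ler_wpM2r //; lra.
have := dominant_sum (k := fun i => xi i w)
  (e := fun i => ft (xi i w) (Fcomp ft xi i x w) - fstep (xi i w) (Fcomp ft xi i x w))
  (i0 := Ordinal (leq_trans ij lo)) C0 L0 (fun i => ftC _ (xi_pos i)) ji hE.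
have := itv_dist x Fn; rewrite Fcomp_sum addrAC subrr add0r -/L; lra.
Qed.

End Pathwise.

Lemma measure_fin_disjoint_union d (T : measurableType d) (R : realType)
    (mu : {measure set T -> \bar R}) (I : finType) (F : I -> set T) :
  (forall i, measurable (F i)) -> trivIset setT F ->
  mu (\bigcup_i F i) = (\sum_(i : I) mu (F i))%E.
Proof.
move=> mF tF; rewrite measure_fin_bigcup //; last exact: finite_finset.
rewrite (fsbigE (index_enum I)) ?index_enum_uniq //=; last first.
  by move=> i _; rewrite mem_index_enum.
by apply: eq_bigl => i; rewrite in_setT.
Qed.

(* The partial sums of p_k telescope: sum_{k <= M} p_k = M/(M+1). *)
Lemma sum_pk (R : realType) (M : nat) : \sum_(k < M.+1) pk R k = M%:R / M.+1%:R.
Proof.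
elim: M => [|M IH]; first by rewrite big_ord1 /pk mul0r invr0 mul0r.
rewrite big_ord_recr /= IH /pk -[M.+2]addn1 -[M.+1]addn1 !natrD.
have M0 : (0 : R) <= M%:R by [].
by field; rewrite !lt0r_neq0 //; lra.
Qed.

Lemma bernoulli_ineq (R : realFieldType) (t : R) (n : nat) :
  0 <= t -> 1 + n%:R * t <= (1 + t) ^+ n.
Proof.
move=> t0; elim: n => [|n IH]; first by rewrite mul0r addr0 expr0.
rewrite exprS -[n.+1]addn1 natrD.
have : 1 <= (1 + t) ^+ n by rewrite exprn_ege1 // lerDl.
nra.
Qed.

(* The probability (j/(j+1))^{j(j+1)} that the first j(j+1) indices are all
   at most j is at most 2^{-j}. *)
Lemma short_run_bound (R : realFieldType) (j : nat) :
  (j%:R / j.+1%:R : R) ^+ (j * j.+1) <= 2 / (2 ^ j.+1)%:R.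
Proof.
case: j => [|j]; first by rewrite mul0n expr0 expn1; lra.
set q : R := j.+1%:R / j.+2%:R.
have j1 : (0 : R) < j.+1%:R by rewrite ltr0n.
have q0 : 0 <= q by rewrite /q divr_ge0.
have q_half : q ^+ j.+2 <= 2^-1.
  have jinv : (0 : R) < j.+1%:R^-1 by rewrite invr_gt0.
  have hb := bernoulli_ineq j.+2 (ltW jinv).
  have hq : q * (1 + j.+1%:R^-1) = 1.
    by rewrite /q -[j.+2]addn1 natrD; field; rewrite !lt0r_neq0 //; lra.
  have hB : (2 : R) <= (1 + j.+1%:R^-1) ^+ j.+2.
    have : (1 : R) <= j.+2%:R / j.+1%:R by rewrite ler_pdivlMr // mul1r ler_nat.
    move: hb; set r := j.+2%:R / j.+1%:R; lra.
  have : q ^+ j.+2 * (1 + j.+1%:R^-1) ^+ j.+2 = 1 by rewrite -exprMn hq expr1n.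
  have := exprn_ge0 j.+2 q0; nra.
rewrite mulnC exprM; apply: (le_trans (y := 2^-1 ^+ j.+1)).
  by apply: lerXn2r; rewrite ?nnegrE ?exprn_ge0 //; lra.
rewrite natrX exprVn -[X in _ <= X / _]expr1 -[j.+2]addn1 exprD expr1.
by rewrite invfM mulrCA mulfV ?mulr1 //; lra.
Qed.

Section SummableBound.
Local Open Scope ereal_scope.

Lemma summable_half_powers (R : realType) (u : (\bar R)^nat) :
  (forall j, 0 <= u j) -> (forall j, u j <= ((2 : R) / (2 ^ j.+1)%:R)%:E) ->
  \sum_(j <oo) u j < +oo.
Proof.
move=> u0 ub; apply: (@le_lt_trans _ _ (\sum_(j <oo) ((2 : R) / (2 ^ j.+1)%:R)%:E)).
  by apply: lee_nneseries.
suff -> : \sum_(j <oo) ((2 : R) / (2 ^ j.+1)%:R)%:E = ((2 : R) / 2 ^+ 0)%:E.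
  by rewrite ltry.
apply: cvg_lim => //.
have -> : (fun n => \sum_(0 <= k < n) ((2 : R) / (2 ^ k.+1)%:R)%:E) =
    eseries (fun k => ((2 : R) / (2 ^ (k + 1))%:R)%:E).
  by apply/funext => n; apply: eq_bigr => k _; rewrite addn1.
exact: cvg_geometric_eseries_half.
Qed.

End SummableBound.

Section IidSequence.
Variables (d : measure_display) (T : measurableType d) (R : realType)
  (P : probability T R) (xi : nat -> T -> nat).
Hypothesis hxi : iid_law P xi.

Definition bounded_run (m M : nat) (A : nat -> pred nat) : set T :=
  \bigcap_(i in [set i | (i < m)%N]) [set w | (xi i w <= M)%N && A i (xi i w)].

Lemma bounded_run_measurable (m M : nat) (A : nat -> pred nat) :
  measurable (bounded_run m M A).
Proof.
apply: bigcap_measurableType => i _.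
have -> : [set w | (xi i w <= M)%N && A i (xi i w)] =
    \bigcup_(k in [set k | (k <= M)%N && A i k]) [set w | xi i w = k].
  by apply/seteqP; split => w /=; [exists (xi i w)|case=> k /= ? ->].
by apply: bigcup_measurable => k _; exact: hxi.1.
Qed.

Definition ext_ord (m M : nat) (f : {ffun 'I_m -> 'I_M.+1}) (i : nat) : nat :=
  if @insub _ (fun j => (j < m)%N) 'I_m i is Some o then val (f o) else 0%N.

Lemma ext_ordE (m M : nat) (f : {ffun 'I_m -> 'I_M.+1}) (i : 'I_m) :
  ext_ord f i = f i.
Proof. by rewrite /ext_ord valK. Qed.

Lemma prob_bounded_run (m M : nat) (A : nat -> pred nat) :
  P (bounded_run m M A) = (\prod_(i < m) \sum_(k < M.+1 | A i k) pk R k)%:E.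
Proof.
pose cyl (f : {ffun 'I_m -> 'I_M.+1}) :=
  if [forall i : 'I_m, A i (f i)] then
    \bigcap_(i in [set i | (i < m)%N]) [set w | xi i w = ext_ord f i]
  else set0.
have -> : bounded_run m M A = \bigcup_f cyl f.
  apply/seteqP; split => w.
  - move=> hw; have {}hw (i : 'I_m) : (xi i w <= M)%N /\ A i (xi i w).
      by apply/andP; exact: hw i (ltn_ord i).
    pose f := [ffun i : 'I_m => (inord (xi i w) : 'I_M.+1)].
    have val_f (i : 'I_m) : (f i : nat) = xi i w.
      by rewrite ffunE inordK // ltnS; case: (hw i).
    exists f => //; rewrite /cyl; case: ifPn => [_ i /= im|/forallPn [i]].
      by rewrite -[i]/(val (Ordinal im)) ext_ordE val_f.
    by move=> /negP; apply; rewrite val_f; case: (hw i).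
  - case=> f _; rewrite /cyl; case: ifPn => [/forallP hA hc i /= im|//].
    have := hc i im; rewrite /= -[i]/(val (Ordinal im)) ext_ordE => ->.
    by rewrite -ltnS ltn_ord hA.
rewrite measure_fin_disjoint_union; last first.
- move=> f1 f2 _ _ [w [h1 h2]]; apply/ffunP => i; apply: val_inj.
  move: h1 h2; rewrite /cyl; case: ifP => _ // h1; case: ifP => _ // h2.
  by have := h1 i (ltn_ord i); have := h2 i (ltn_ord i); rewrite /= !ext_ordE => <-.
- by move=> f; rewrite /cyl; case: ifP => _ //; apply: bigcap_measurableType => i _; exact: hxi.1.
rewrite (eq_bigr (fun i : 'I_m => \sum_(k < M.+1) if A i k then pk R k else 0)); last first.
  by move=> i _; rewrite big_mkcond.
rewrite bigA_distr_bigA /= -sumEFin; apply: eq_bigr => f _.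
rewrite /cyl; case: ifPn => [/forallP hA|/forallPn [i hi]].
  by rewrite hxi.2; congr EFin; apply: eq_bigr => i _; rewrite ext_ordE hA.
by rewrite measure0 (bigD1 i) //= (negbTE hi) mul0r.
Qed.

(* Almost surely no xi_i vanishes, since p_0 = 0. *)
Lemma ae_xi_pos : {ae P, forall w, forall i, (0 < xi i w)%N}.
Proof.
apply: ae_foralln => i.
pose A (l k : nat) := (l != i) || (k == 0%N).
apply: (@negligibleS _ _ _ _ (\bigcup_M bounded_run i.+1 M A)).
  move=> w /=; rewrite lt0n => /negP/negPn/eqP xi0.
  exists (\max_(l < i.+1) xi l w) => // l /= li.
  rewrite -[l]/(val (Ordinal li)) leq_bigmax /A /=.
  by case: eqP => // ->; rewrite xi0.
apply: negligible_bigcup => M; apply/negligibleP; first exact: bounded_run_measurable.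
rewrite -[LHS]/(P (bounded_run i.+1 M A)) prob_bounded_run big_ord_recr /=.
rewrite (_ : \sum_(k < M.+1 | A i k) pk R k = 0) ?mulr0 //.
by apply: big1 => k; rewrite /A eqxx /= => /eqP ->; rewrite /pk mul0r invr0.
Qed.

(* Borel-Cantelli: almost surely, for all large j, some xi_i with
   i < j(j+1) exceeds j. *)
Lemma ae_eventually_exceeds :
  {ae P, forall w, exists J, forall j, (J <= j)%N ->
    exists2 i, (i < j * j.+1)%N & (j < xi i w)%N}.
Proof.
pose B j := bounded_run (j * j.+1) j (fun _ _ => true).
have mB j : measurable (B j) by exact: bounded_run_measurable.
have PB0 : P (lim_sup_set B) = 0%E.
  apply: lim_sup_set_cvg0 => //; apply: summable_half_powers => // j.
  rewrite -[X in (X <= _)%E]/(P (B j)) prob_bounded_run.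
  rewrite lee_fin prodr_const card_ord sum_pk.
  exact: short_run_bound.
apply: (@negligibleS _ _ _ _ (lim_sup_set B)); last first.
  apply/negligibleP => //.
  by apply: bigcap_measurableType => n _; exact: bigcup_measurable.
move=> w /= no_J n _; apply: contrapT => not_Bn; apply: no_J.
exists n => j nj; apply: contrapT => no_i; apply: not_Bn.
exists j => // i /= ij; rewrite andbT leqNgt; apply/negP => ji.
by apply: no_i; exists i.
Qed.

End IidSequence.

Theorem mainTheorem11 (R : realType) (d : measure_display) (T : measurableType d)
  (P : probability T R) (xi : nat -> T -> nat) :
  iid_law P xi ->
  (forall (x a b : R),
     {ae P, forall w, finite_set
        [set n : nat | (0 < n)%N /\ Fcomp (@fstep R) xi n x w \in `[a, b]]})
  /\
  (forall (ft : nat -> R -> R),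
     (exists C : R, forall (k : nat) (y : R), (1 <= k)%N ->
        `|ft k y - fstep k y| <= C) ->
     forall (x a b : R),
     {ae P, forall w, finite_set
        [set n : nat | (0 < n)%N /\ Fcomp ft xi n x w \in `[a, b]]}).
Proof.
move=> hxi.
have escape (ft : nat -> R -> R) (C : R) :
    (forall (k : nat) (y : R), (1 <= k)%N -> `|ft k y - fstep k y| <= C) ->
    forall (x a b : R), {ae P, forall w, finite_set
      [set n : nat | (0 < n)%N /\ Fcomp ft xi n x w \in `[a, b]]}.
  move=> ftC x a b.
  apply: filterS2 (ae_xi_pos hxi) (ae_eventually_exceeds hxi) => w xi_pos large.
  exact: escape_pathwise ftC w x a b xi_pos large.
split; last by move=> ft [C ftC]; exact: escape ftC.
by apply: (escape _ 0) => k y _; rewrite subrr normr0.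
Qed.
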